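(* Let $d\ge1$, $m\ge1$, $\nu\ge2$ be integers, $\Lambda\subset\mathbb Z^d$ finite, containing $\mathbf 0$ and symmetric, $\boldsymbol\Sigma=\{\Sigma_{\mathbf k}\}_{\mathbf k\in\Lambda}$ with $\Sigma_{-\mathbf k}=\Sigma_{\mathbf k}^*\in\mathbb C^{m\times m}$, and $\Psi$ an $m\times m$ matrix-valued function on $\mathbb T^d$ with rational entries which is bounded and coercive. Assume the Feasibility Assumption, and let $\mathbf Q^\circ\in\partial\mathscr L_+$ be the unique minimizer of $J_\nu$ over $\mathscr L_+$. Let $K(\mathbf Q^\circ)=\{\boldsymbol\Sigma_K:\ \langle\boldsymbol\Sigma_K,\mathbf Q-\mathbf Q^\circ\rangle\le0\text{ for all }\mathbf Q\in\mathscr L_+\}$. If $\boldsymbol\Sigma_K\in K(\mathbf Q^\circ)$, then $-\boldsymbol\Sigma_K\in\overline{\mathfrak C}_+$, the closure of $$\mathfrak C_+=\{\boldsymbol\Sigma:\ \langle\boldsymbol\Sigma,\mathbf Q\rangle>0\text{ for all }\mathbf Q\neq0\text{ such that }Q(e^{i\boldsymbol\theta})\ge0\ \forall\boldsymbol\theta\in\mathbb T^d\}.$$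
   Context: $\mathbb T^d=(-\pi,\pi]^d$, $\mathrm d\mu=(2\pi)^{-d}\prod_j\mathrm d\theta_j$; bounded and coercive means $aI_m\le\Psi\le bI_m$ on $\mathbb T^d$ for some $b>a>0$. All $\mathbf Q$ and $\boldsymbol\Sigma$'s are families $\{Q_{\mathbf k}\}_{\mathbf k\in\Lambda}$ of $m\times m$ complex matrices with $Q_{-\mathbf k}=Q_{\mathbf k}^*$; $Q(e^{i\boldsymbol\theta})=\sum_{\mathbf k}Q_{\mathbf k}e^{-i\langle\mathbf k,\boldsymbol\theta\rangle}$, $\langle\mathbf k,\boldsymbol\theta\rangle=\sum_jk_j\theta_j$, and $\langle\mathbf Q,\boldsymbol\Sigma\rangle=\sum_{\mathbf k}\operatorname{tr}(Q_{\mathbf k}\Sigma_{\mathbf k}^* )$. $\mathscr L_+=\{\mathbf Q:\nu\Psi^{-1}+Q\ge0\text{ on }\mathbb T^d,\ \text{not identically zero}\}$, with boundary $\partial\mathscr L_+$ the set of those $\mathbf Q$ with $\Psi^{-1}+\frac1\nu Q$ positive semidefinite on $\mathbb T^d$ and singular somewhere. $J_\nu(\mathbf Q)=\langle\mathbf Q,\boldsymbol\Sigma\rangle+\frac{\nu}{\nu-1}\int_{\mathbb T^d}\operatorname{tr}\{[\Psi^{-1}(\Psi^{-1}+\frac1\nu Q)^{-1}]^{\nu-1}\}\mathrm d\mu$ (integral over the complement of the null set where the determinant vanishes). Feasibility Assumption: there is a Hermitian nonnegative definite matrix-valued measure $M_0$ with $\int e^{i\langle\mathbf k,\boldsymbol\theta\rangle}\mathrm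 dM_0=\Sigma_{\mathbf k}$ for all $\mathbf k\in\Lambda$, and a nonnegative scalar measure $\lambda$ with $\mathrm dM_0=M'_{0,\lambda}\mathrm d\lambda$, $M'_{0,\lambda}$ positive definite on an open ball $B$ with $\lambda(B)>0$. *)

From HB Require Import structures.
From mathcomp Require Import all_boot all_order all_algebra.
From mathcomp Require Import all_classical all_reals all_analysis.
From mathcomp Require Import complex.
From mathcomp Require Import finmap.

Set Implicit Arguments.
Unset Strict Implicit.
Unset Printing Implicit Defensive.

Import Order.TTheory GRing.Theory Num.Theory.
Local Open Scope ring_scope.
Local Open Scope classical_set_scope.

Section Defs.
Variable R : realType.
Local Notation C := (complex R).

Definition torus (d : nat) : set (d.-tuple R) :=
  [set th | forall i : 'I_d, - pi < tnth th i <= pi].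
Arguments torus : clear implicits.

Definition expi (t : R) : C := Complex (cos t) (sin t).

Definition kdot (d : nat) (k : d.-tuple int) (th : d.-tuple R) : R :=
  \sum_(j < d) (tnth k j)%:~R * tnth th j.

Definition negk (d : nat) (k : d.-tuple int) : d.-tuple int := map_tuple -%R k.

Definition ctr (m : nat) (A : 'M[C]_m) : 'M[C]_m := (map_mx (@conjc R) A)^T.

(* Hermitian positive semidefinite / positive definite, via the complex order *)
Definition psd (m : nat) (A : 'M[C]_m) : Prop :=
  forall v : 'cV[C]_m, 0 <= ((map_mx (@conjc R) v)^T *m A *m v) 0 0.
Definition pd (m : nat) (A : 'M[C]_m) : Prop :=
  forall v : 'cV[C]_m, v != 0 -> 0 < ((map_mx (@conjc R) v)^T *m A *m v) 0 0.

(* A family is represented by a function on Z^d; only its values on Lambda matter. *)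
Definition is_family (d m : nat) (Lam : {fset d.-tuple int})
  (Q : d.-tuple int -> 'M[C]_m) : Prop :=
  forall k, k \in Lam -> Q (negk k) = ctr (Q k).

Definition fam_eq (d m : nat) (Lam : {fset d.-tuple int})
  (Q Q' : d.-tuple int -> 'M[C]_m) : Prop :=
  forall k, k \in Lam -> Q k = Q' k.

Definition Qfun (d m : nat) (Lam : {fset d.-tuple int})
  (Q : d.-tuple int -> 'M[C]_m) (th : d.-tuple R) : 'M[C]_m :=
  \sum_(k <- Lam) expi (- kdot k th) *: Q k.

(* <Q, S> = sum_k tr (Q_k (S_k)^H)  (real for families; we take the real part) *)
Definition fam_ip (d m : nat) (Lam : {fset d.-tuple int})
  (Q S : d.-tuple int -> 'M[C]_m) : R :=
  complex.Re (\sum_(k <- Lam) \tr (Q k *m ctr (S k))).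

(* ---------- normalized integral over T^d (iterated, for nonnegative integrands) ---------- *)
Fixpoint torus_int (d : nat) : (d.-tuple R -> \bar R) -> \bar R :=
  match d with
  | 0 => fun f => f [tuple]
  | d'.+1 => fun f =>
      ((2 * pi)^-1)%:E *
      \int[@lebesgue_measure R]_(x in [set x : R | (- pi < x <= pi)%R])
         torus_int (fun t : d'.-tuple R => f [tuple of x :: t])
  end%E.

Definition trig_poly (d : nat) (s : seq (C * d.-tuple int)) (th : d.-tuple R) : C :=
  \sum_(ck <- s) ck.1 * expi (kdot ck.2 th).

Definition rational_entries (d m : nat) (Psi : d.-tuple R -> 'M[C]_m) : Prop :=
  forall i j : 'I_m, exists (p q : seq (C * d.-tuple int)),
    (forall th, torus d th -> trig_poly q th != 0) /\
    (forall th, torus d th -> Psi th i j = trig_poly p th / trig_poly q th).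

Definition bounded_coercive (d m : nat) (Psi : d.-tuple R -> 'M[C]_m) : Prop :=
  exists a b : R, 0 < a /\ a < b /\
    forall th, torus d th ->
      psd (Psi th - (Complex a 0)%:M) /\ psd ((Complex b 0)%:M - Psi th).

Definition Lplus (d m nu : nat) (Lam : {fset d.-tuple int})
  (Psi : d.-tuple R -> 'M[C]_m) (Q : d.-tuple int -> 'M[C]_m) : Prop :=
  is_family Lam Q /\
  (forall th, torus d th -> psd ((nu%:R : C) *: invmx (Psi th) + Qfun Lam Q th)) /\
  (exists th, torus d th /\ (nu%:R : C) *: invmx (Psi th) + Qfun Lam Q th != 0).

Definition dLplus (d m nu : nat) (Lam : {fset d.-tuple int})
  (Psi : d.-tuple R -> 'M[C]_m) (Q : d.-tuple int -> 'M[C]_m) : Prop :=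
  is_family Lam Q /\
  (forall th, torus d th -> psd (invmx (Psi th) + (nu%:R : C)^-1 *: Qfun Lam Q th)) /\
  (exists th, torus d th /\ \det (invmx (Psi th) + (nu%:R : C)^-1 *: Qfun Lam Q th) = 0).

(* integrand, set to 0 on the (null) set where the determinant vanishes *)
Definition J_integrand (d m nu : nat) (Lam : {fset d.-tuple int})
  (Psi : d.-tuple R -> 'M[C]_m) (Q : d.-tuple int -> 'M[C]_m) (th : d.-tuple R) : \bar R :=
  let A := invmx (Psi th) + (nu%:R : C)^-1 *: Qfun Lam Q th in
  if \det A != 0 then
    (complex.Re (\tr ((invmx (Psi th) *m invmx A) ^+ (nu.-1))))%:E
  else 0%E.

Definition J_nu (d m nu : nat) (Lam : {fset d.-tuple int})
  (Psi : d.-tuple R -> 'M[C]_m) (Sigma Q : d.-tuple int -> 'M[C]_m) : \bar R :=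
  ((fam_ip Lam Q Sigma)%:E +
   (nu%:R / (nu%:R - 1))%:E * torus_int (J_integrand nu Lam Psi Q))%E.

Definition cint (d : nat) (lam : {measure set (d.-tuple R) -> \bar R})
  (D : set (d.-tuple R)) (f : d.-tuple R -> C) : C :=
  Complex (Rintegral lam D (fun x => complex.Re (f x)))
          (Rintegral lam D (fun x => complex.Im (f x))).

Definition cintegrable (d : nat) (lam : {measure set (d.-tuple R) -> \bar R})
  (D : set (d.-tuple R)) (f : d.-tuple R -> C) : Prop :=
  lam.-integrable D (fun x => (complex.Re (f x))%:E) /\
  lam.-integrable D (fun x => (complex.Im (f x))%:E).

(* dM_0 = M' dlam, M' Hermitian psd, M' pd on an open ball B with lam(B) > 0,
   and int e^{i<k,theta>} dM_0 = Sigma_k for k in Lambda *)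
Definition feasible (d m : nat) (Lam : {fset d.-tuple int})
  (Sigma : d.-tuple int -> 'M[C]_m) : Prop :=
  exists (lam : {measure set (d.-tuple R) -> \bar R}) (M' : d.-tuple R -> 'M[C]_m),
    (forall th, torus d th -> psd (M' th)) /\
    (forall k, k \in Lam -> forall i j : 'I_m,
       cintegrable lam (torus d) (fun th => expi (kdot k th) * M' th i j) /\
       Sigma k i j = cint lam (torus d) (fun th => expi (kdot k th) * M' th i j)) /\
    (exists (c : d.-tuple R) (r : R), 0 < r /\
       let B := [set th | torus d th /\
                   \sum_(i < d) (tnth th i - tnth c i) ^+ 2 < r ^+ 2] in
       (0 < lam B)%E /\ (forall th, B th -> pd (M' th))).

Definition Cplus (d m : nat) (Lam : {fset d.-tuple int})
  (S : d.-tuple int -> 'M[C]_m) : Prop :=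
  is_family Lam S /\
  forall Q : d.-tuple int -> 'M[C]_m, is_family Lam Q ->
    (exists k, k \in Lam /\ Q k != 0) ->
    (forall th, torus d th -> psd (Qfun Lam Q th)) ->
    0 < fam_ip Lam S Q.

Definition fam_closure (d m : nat) (Lam : {fset d.-tuple int})
  (P : (d.-tuple int -> 'M[C]_m) -> Prop) (S : d.-tuple int -> 'M[C]_m) : Prop :=
  forall eps : R, 0 < eps -> exists S', P S' /\
    forall k, k \in Lam -> forall i j : 'I_m, `|S' k i j - S k i j| < Complex eps 0.

Definition normal_cone (d m nu : nat) (Lam : {fset d.-tuple int})
  (Psi : d.-tuple R -> 'M[C]_m) (Q0 SK : d.-tuple int -> 'M[C]_m) : Prop :=
  is_family Lam SK /\
  forall Q, Lplus nu Lam Psi Q -> fam_ip Lam SK (fun k => Q k - Q0 k) <= 0.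

End Defs.

From HB Require Import structures.
From mathcomp Require Import all_boot all_order all_algebra.
From mathcomp Require Import all_classical all_reals all_analysis.
From mathcomp Require Import complex.
From mathcomp Require Import finmap.
From mathcomp Require Import ring lra.

(* If [Q(e^{i theta}) >= 0] on the torus, then [Q0 + Q] or [Q0 + 2 Q] lies in [L_+], so the
   normal-cone inequality gives [<SK, Q> <= 0]: [- SK] is in the closed dual of the cone of
   nonnegative trigonometric polynomials.  Adding [eps I] at [k = 0] makes it strictly
   positive on nonzero such [Q], because [tr Q_0 > 0]: averaging [Q(e^{i theta})] over a
   fine regular grid recovers [Q_0] exactly (discrete orthogonality of the characters), and
   if that psd average had zero trace, [Q] would vanish at every grid point and hence all
   its coefficients would vanish.  Letting [eps -> 0] puts [- SK] in the closure of [C_+]. *)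

Set Implicit Arguments.
Unset Strict Implicit.
Unset Printing Implicit Defensive.

Import Order.TTheory GRing.Theory Num.Theory.
Local Open Scope ring_scope.

Lemma sum_root_unity_eq0 (F : idomainType) (z : F) N :
  z != 1 -> z ^+ N = 1 -> \sum_(j < N) z ^+ j.+1 = 0.
Proof.
move=> z_neq1 zN1; have := subrX1 z N; rewrite zN1 subrr => /esym/eqP.
rewrite mulf_eq0 subr_eq0 (negbTE z_neq1) /= => /eqP sum0.
transitivity (z * \sum_(j < N) z ^+ j); last by rewrite sum0 mulr0.
by rewrite mulr_sumr; apply: eq_bigr => j _; rewrite exprS.
Qed.

Section Expi.
Variable R : realType.

Lemma expi0 : expi (0 : R) = 1.
Proof. by rewrite /expi cos0 sin0. Qed.

Lemma expiD (x y : R) : expi (x + y) = expi x * expi y.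
Proof. by rewrite /expi cosD sinD /=; simpc; rewrite [X in (_ +i* X)%C]addrC. Qed.

Lemma expi_sum (I : Type) (r : seq I) (P : pred I) (F : I -> R) :
  expi (\sum_(i <- r | P i) F i) = \prod_(i <- r | P i) expi (F i).
Proof. exact: (big_morph _ expiD expi0). Qed.

Lemma expiMn n (x : R) : expi (n%:R * x) = expi x ^+ n.
Proof.
elim: n => [|n IHn]; first by rewrite mul0r expi0.
by rewrite -addn1 natrD mulrDl mul1r expiD IHn exprD.
Qed.

Lemma expi_intr2pi (z : int) : expi (z%:~R * pi *+ 2 : R) = 1.
Proof.
have expi_nat n : expi (n%:R * pi *+ 2 : R) = 1.
  by rewrite -mulrnAr expiMn /expi cos2pi sin2pi expr1n.
case: z => n; first exact: expi_nat.
rewrite NegzE mulrNz mulNr mulNrn.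
by rewrite -[LHS]mulr1 -[X in _ * X](expi_nat n.+1) -expiD addNr expi0.
Qed.

Lemma expi_neq1 (x : R) : 0 < `|x| < pi *+ 2 -> expi x != 1.
Proof.
move=> /andP[x_gt0 x_lt2pi]; apply/negP => /eqP[cosx1 _].
have sin_half0 : sin (x / 2) = 0.
  have : cos x = 1 - 2 * sin (x / 2) ^+ 2.
    by rewrite {1}(splitr x) cosD -!expr2 cos2sin2; ring.
  rewrite cosx1 => cos_half; apply/eqP; rewrite -sqrf_eq0; apply/eqP; lra.
have : 0 < sin `|x / 2|.
  rewrite normrM normfV normr_nat; apply: sin_gt0_pi.
  by rewrite divr_gt0 //= ltr_pdivrMr // mulr_natr.
by rewrite normrEsg sin_sg sin_half0 mulr0 ltxx.
Qed.

End Expi.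

Section Grid.
Variable R : realType.
Local Notation C := (complex R).

Definition grid_pt N (j : nat) : R := - pi + j.+1%:R * (pi *+ 2 / N%:R).

Definition grid d N (f : {ffun 'I_d -> 'I_N}) : d.-tuple R :=
  [tuple grid_pt N (f i) | i < d].

Lemma grid_torus d N (f : {ffun 'I_d -> 'I_N}) : (0 < N)%N -> torus (grid f).
Proof.
move=> N_gt0 i; rewrite tnth_mktuple /grid_pt.
have pi2_gt0 : (0 : R) < pi *+ 2 by rewrite pmulrn_rgt0 // pi_gt0.
have step_gt0 : (0 : R) < (f i).+1%:R * (pi *+ 2 / N%:R).
  by rewrite mulr_gt0 ?divr_gt0 ?ltr0n.
have step_le2pi : (f i).+1%:R * (pi *+ 2 / N%:R) <= (pi *+ 2 : R).
  rewrite mulrCA ler_piMr ?(ltW pi2_gt0) // ler_pdivrMr ?ltr0n // mul1r ler_nat.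
  exact: ltn_ord.
rewrite mulr2n in step_le2pi; apply/andP; split; lra.
Qed.

Lemma sum_expi_grid_pt N (a : int) : (0 < N)%N -> (`|a| < N)%N ->
  \sum_(j < N) expi (a%:~R * grid_pt N j) = if a == 0 then N%:R else 0.
Proof.
move=> N_gt0 aN; have N_gt0' : (0 : R) < N%:R by rewrite ltr0n.
have pi2_gt0 : (0 : R) < pi *+ 2 by rewrite pmulrn_rgt0 // pi_gt0.
have [->|a_neq0] := eqVneq a 0.
  by under eq_bigr do rewrite mul0r expi0; rewrite sumr_const card_ord.
set h := (pi *+ 2 / N%:R : R).
have -> : \sum_(j < N) expi (a%:~R * grid_pt N j) =
    expi (a%:~R * - pi) * \sum_(j < N) expi (a%:~R * h) ^+ j.+1.
  rewrite mulr_sumr; apply: eq_bigr => j _.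
  by rewrite /grid_pt mulrDr -expiMn expiD mulrCA.
rewrite sum_root_unity_eq0 ?mulr0 //; last first.
  rewrite -expiMn (_ : N%:R * (a%:~R * h) = a%:~R * pi *+ 2) ?expi_intr2pi //.
  by rewrite /h; field; rewrite gt_eqF.
apply: expi_neq1; rewrite normrM (gtr0_norm (x := h)) ?divr_gt0 //.
rewrite -intr_norm -natr_absz mulr_gt0 ?divr_gt0 ?ltr0n ?absz_gt0 //=.
by rewrite /h mulrCA gtr_pMr // ltr_pdivrMr // mul1r ltr_nat.
Qed.

Lemma sum_grid_expi_kdot d N (k1 k2 : d.-tuple int) : (0 < N)%N ->
  (forall i, `|tnth k1 i - tnth k2 i| < N)%N ->
  \sum_(f : {ffun 'I_d -> 'I_N}) expi (kdot k1 (grid f)) * expi (- kdot k2 (grid f))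
    = if k1 == k2 then N%:R ^+ d else 0.
Proof.
move=> N_gt0 k12N.
under eq_bigr => f _.
  rewrite -expiD /kdot -sumrB expi_sum.
  under eq_bigr => i _ do rewrite tnth_mktuple -mulrBl -intrB.
  over.
rewrite -(bigA_distr_bigA (fun i (j : 'I_N) =>
  expi ((tnth k1 i - tnth k2 i)%:~R * grid_pt N j))) /=.
under eq_bigr do rewrite sum_expi_grid_pt //.
have [->|k12] := eqVneq k1 k2.
  by under eq_bigr do rewrite subrr eqxx; rewrite prodr_const card_ord.
have [i k12i] : exists i, tnth k1 i != tnth k2 i.
  apply/existsP; apply: contraNT k12 => /existsPn k12i.
  by apply/eqP/eq_from_tnth => i; apply/eqP/negPn.
by rewrite (bigD1 i) //= subr_eq0 (negbTE k12i) mul0r.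
Qed.

Lemma Qfun_grid_coef d m (Lam : {fset d.-tuple int}) (Q : d.-tuple int -> 'M[C]_m)
    N k1 : (0 < N)%N -> k1 \in Lam ->
  (forall k, k \in Lam -> forall i, `|tnth k1 i - tnth k i| < N)%N ->
  \sum_(f : {ffun 'I_d -> 'I_N}) expi (kdot k1 (grid f)) *: Qfun Lam Q (grid f)
    = N%:R ^+ d *: Q k1.
Proof.
move=> N_gt0 k1_Lam Lam_N; rewrite /Qfun.
under eq_bigr do rewrite scaler_sumr.
rewrite exchange_big /=.
under eq_bigr do (under eq_bigr do rewrite scalerA; rewrite -scaler_suml).
rewrite (bigD1_seq k1) ?fset_uniq //= sum_grid_expi_kdot ?eqxx //; last exact: Lam_N.
rewrite big1_seq ?addr0 // => k /andP[k_neq_k1 k_Lam].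
rewrite sum_grid_expi_kdot //; last exact: Lam_N.
by rewrite eq_sym (negbTE k_neq_k1) scale0r.
Qed.

End Grid.

Arguments grid {R d N}.

Section Psd.
Variables (R : realType) (m : nat).
Local Notation C := (complex R).
Implicit Types (A B : 'M[C]_m).

Lemma psdD A B : psd A -> psd B -> psd (A + B).
Proof. by move=> psdA psdB v; rewrite mulmxDr mulmxDl mxE addr_ge0. Qed.

Lemma qf_pair A i j (c : C) :
  let v : 'cV[C]_m := delta_mx i 0 + c *: delta_mx j 0 in
  ((map_mx (@conjc R) v)^T *m A *m v) 0 0 =
  A i i + c * A i j + c^*%C * A j i + c^*%C * c * A j j.
Proof.
rewrite /=.
have -> : (map_mx (@conjc R) (delta_mx i 0 + c *: delta_mx j 0 : 'cV[C]_m))^T =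
    delta_mx 0 i + c^*%C *: delta_mx 0 j.
  apply/matrixP => a b; rewrite [a]ord1 !mxE !eqxx /= ?andbT.
  by rewrite rmorphD rmorphM /= !conjc_nat.
rewrite mulmxDr !mulmxDl -!scalemxAl -!scalemxAr -!rowE -!colE !mxE.
ring.
Qed.

Lemma psd_diag_ge0 A i : psd A -> 0 <= A i i.
Proof.
move=> psdA; have := psdA (delta_mx i 0 + 0 *: delta_mx i 0).
by rewrite qf_pair rmorph0 !mul0r !addr0.
Qed.

Lemma psd_trace_ge0 A : psd A -> 0 <= \tr A.
Proof. by move=> psdA; apply: sumr_ge0 => i _; apply: psd_diag_ge0. Qed.

Lemma psd_trace_eq0 A : psd A -> \tr A = 0 -> A = 0.
Proof.
move=> psdA trA0.
have diag0 i : A i i = 0.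
  apply: (psumr_eq0P (P := xpredT) (F := fun i => A i i)) => // k _.
  exact: psd_diag_ge0.
apply/matrixP => i j; rewrite mxE.
have form (c : C) : 0 <= c * A i j + c^*%C * A j i.
  have := psdA (delta_mx i 0 + c *: delta_mx j 0).
  by rewrite qf_pair !diag0 mulr0 add0r addr0.
have sum0 : A i j + A j i = 0.
  have := form 1; rewrite conjc1 !mul1r => ge0.
  have := form (-1); rewrite rmorphN1 !mulN1r -opprD oppr_ge0 => le0.
  by apply/eqP; rewrite eq_le le0 ge0.
have diff0 : 'i%C * (A i j - A j i) = 0.
  have conj_i : 'i%C^*%C = - 'i%C :> C by apply/eqP; rewrite eq_complex /= oppr0 !eqxx.
  have conj_Ni : (- 'i%C)^*%C = 'i%C :> C.
    by apply/eqP; rewrite eq_complex /= !oppr0 opprK !eqxx.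
  have := form 'i%C; rewrite conj_i mulNr -mulrBr => ge0_ij.
  have := form (- 'i%C); rewrite conj_Ni mulNr addrC -mulrBr => ge0_ji.
  by apply/eqP; rewrite eq_le ge0_ij andbT -oppr_ge0 -mulrN opprB.
move/eqP: diff0; rewrite mulf_eq0 subr_eq0 => /orP[/eqP|/eqP eqji].
  by move/eqP; rewrite eq_complex /= oner_eq0 andbF.
by move/eqP: sum0; rewrite eqji -mulr2n mulrn_eq0 => /eqP.
Qed.

End Psd.

Lemma fset_tuple_dist_bounded d (Lam : {fset d.-tuple int}) :
  exists2 N, (0 < N)%N &
    forall k1 k2, k1 \in Lam -> k2 \in Lam -> forall i, (`|tnth k1 i - tnth k2 i| < N)%N.
Proof.
pose M := (\max_(k <- Lam) \max_(i < d) `|tnth k i|)%N.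
have le_M k i : k \in Lam -> (`|tnth k i| <= M)%N.
  move=> k_Lam; apply: leq_trans (leq_bigmax_seq _ k_Lam isT).
  by rewrite (bigD1 i) //= leq_maxl.
exists M.*2.+1 => // k1 k2 k1_Lam k2_Lam i.
rewrite ltnS -addnn; apply: leq_trans (leqD_dist _ 0 _) _.
by rewrite subr0 sub0r abszN leq_add ?le_M.
Qed.

Section Trace.
Variables (R : realType) (d m : nat) (Lam : {fset d.-tuple int}).
Local Notation C := (complex R).

Lemma psd_Qfun_trace_coef0_gt0 (Q : d.-tuple int -> 'M[C]_m) :
  [tuple of nseq d 0] \in Lam -> (exists k, k \in Lam /\ Q k != 0) ->
  (forall th, torus th -> psd (Qfun Lam Q th)) ->
  0 < \tr (Q [tuple of nseq d 0]).
Proof.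
set k0 := [tuple of nseq d 0] => k0_Lam [k [k_Lam Qk_neq0]] Qpsd.
have [N N_gt0 Lam_N] := fset_tuple_dist_bounded Lam.
have coef k1 : k1 \in Lam ->
    \sum_(f : {ffun 'I_d -> 'I_N}) expi (kdot k1 (grid f)) *: Qfun Lam Q (grid f)
    = N%:R ^+ d *: Q k1.
  by move=> k1_Lam; apply: Qfun_grid_coef => // k2 k2_Lam; apply: Lam_N.
have sum_Qfun : \sum_(f : {ffun 'I_d -> 'I_N}) Qfun Lam Q (grid f) = N%:R ^+ d *: Q k0.
  rewrite -coef //; apply: eq_bigr => f _.
  by rewrite /kdot big1 ?expi0 ?scale1r // => i _; rewrite tnth_nseq mul0r.
have Nd_gt0 : (0 : C) < N%:R ^+ d by rewrite exprn_gt0 ?ltr0n.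
have tr_sum : N%:R ^+ d * \tr (Q k0) =
    \sum_(f : {ffun 'I_d -> 'I_N}) \tr (Qfun Lam Q (grid f)).
  by rewrite -mxtraceZ -sum_Qfun raddf_sum.
have tr_ge0 (f : {ffun 'I_d -> 'I_N}) : 0 <= \tr (Qfun Lam Q (grid f)).
  exact/psd_trace_ge0/Qpsd/grid_torus.
rewrite lt_def -(pmulr_rge0 _ Nd_gt0) tr_sum sumr_ge0 // andbT.
apply: contra Qk_neq0 => /eqP tr0.
have Qfun0 (f : {ffun 'I_d -> 'I_N}) : Qfun Lam Q (grid f) = 0.
  apply: psd_trace_eq0; first exact/Qpsd/grid_torus.
  apply: (psumr_eq0P (P := xpredT) (F := fun f => \tr (Qfun Lam Q (grid f)))) => //.
  by rewrite -tr_sum tr0 mulr0.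
have := coef k k_Lam; under eq_bigr do rewrite Qfun0 scaler0.
by rewrite big1 // => /esym/eqP; rewrite scaler_eq0 gt_eqF.
Qed.

End Trace.

Lemma negkK d : involutive (@negk d).
Proof. by move=> k; apply: eq_from_tnth => i; rewrite !tnth_map opprK. Qed.

Lemma negk0 d : negk [tuple of nseq d 0] = [tuple of nseq d 0].
Proof. by apply: eq_from_tnth => i; rewrite !tnth_map !tnth_nseq oppr0. Qed.

Lemma negk_eq0 d (k : d.-tuple int) :
  (negk k == [tuple of nseq d 0]) = (k == [tuple of nseq d 0]).
Proof. by rewrite -{1}negk0 (can_eq (@negkK d)). Qed.

Section Families.
Variables (R : realType) (d m : nat) (Lam : {fset d.-tuple int}).
Local Notation C := (complex R).
Implicit Types (A B : 'M[C]_m) (Q S : d.-tuple int -> 'M[C]_m).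

Lemma ctrD A B : ctr (A + B) = ctr A + ctr B.
Proof. by apply/matrixP => i j; rewrite !mxE rmorphD. Qed.

Lemma ctrN A : ctr (- A) = - ctr A.
Proof. by apply/matrixP => i j; rewrite !mxE rmorphN. Qed.

Lemma ctr0 : ctr (0 : 'M[C]_m) = 0.
Proof. by apply/matrixP => i j; rewrite !mxE rmorph0. Qed.

Lemma ctr_real_scalar (r : R) : ctr (r%:C%C%:M : 'M[C]_m) = r%:C%C%:M.
Proof.
apply/matrixP => i j; rewrite !mxE rmorphMn eq_sym; congr (_ *+ _).
by apply/eqP; rewrite eq_complex /= oppr0 !eqxx.
Qed.

Lemma is_familyD Q1 Q2 : is_family Lam Q1 -> is_family Lam Q2 ->
  is_family Lam (fun k => Q1 k + Q2 k).
Proof. by move=> fam1 fam2 k k_Lam; rewrite fam1 // fam2 // ctrD. Qed.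

Lemma QfunD Q1 Q2 th :
  Qfun Lam (fun k => Q1 k + Q2 k) th = Qfun Lam Q1 th + Qfun Lam Q2 th.
Proof. by rewrite /Qfun -big_split; apply: eq_bigr => k _; rewrite scalerDr. Qed.

Lemma fam_ipDr S Q1 Q2 :
  fam_ip Lam S (fun k => Q1 k + Q2 k) = fam_ip Lam S Q1 + fam_ip Lam S Q2.
Proof.
rewrite /fam_ip -raddfD -big_split /=; congr complex.Re; apply: eq_bigr => k _.
by rewrite ctrD mulmxDr mxtraceD.
Qed.

Lemma fam_ipDl S1 S2 Q :
  fam_ip Lam (fun k => S1 k + S2 k) Q = fam_ip Lam S1 Q + fam_ip Lam S2 Q.
Proof.
rewrite /fam_ip -raddfD -big_split /=; congr complex.Re; apply: eq_bigr => k _.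
by rewrite mulmxDl mxtraceD.
Qed.

Lemma fam_ipNl S Q : fam_ip Lam (fun k => - S k) Q = - fam_ip Lam S Q.
Proof.
rewrite /fam_ip -raddfN -sumrN /=; congr complex.Re; apply: eq_bigr => k _.
by rewrite mulNmx raddfN.
Qed.

(* [nu Psi^-1 + Q0 + Q] and [nu Psi^-1 + Q0 + 2 Q] cannot both vanish where
   [nu Psi^-1 + Q0] does not. *)
Lemma Lplus_add_psd nu Psi Q0 Q :
  Lplus nu Lam Psi Q0 -> is_family Lam Q -> (forall th, torus th -> psd (Qfun Lam Q th)) ->
  Lplus nu Lam Psi (fun k => Q0 k + Q k) \/
  Lplus nu Lam Psi (fun k => Q0 k + (Q k + Q k)).
Proof.
move=> [fam0 [psd0 [th0 [th0_torus nz0]]]] famQ psdQ.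
have Lplus_add Q' : is_family Lam Q' -> (forall th, torus th -> psd (Qfun Lam Q' th)) ->
    (nu%:R : C) *: invmx (Psi th0) + Qfun Lam (fun k => Q0 k + Q' k) th0 != 0 ->
    Lplus nu Lam Psi (fun k => Q0 k + Q' k).
  move=> famQ' psdQ' nz; split; first exact: is_familyD.
  split; last by exists th0.
  by move=> th th_torus; rewrite QfunD addrA; apply: psdD; [apply: psd0 | apply: psdQ'].
have [nz|/negPn/eqP z] := boolP ((nu%:R : C) *: invmx (Psi th0) +
    Qfun Lam (fun k => Q0 k + Q k) th0 != 0); first by left; apply: Lplus_add.
right; apply: Lplus_add; first exact: is_familyD.
  by move=> th th_torus; rewrite QfunD; apply: psdD; apply: psdQ.
rewrite !QfunD addrA in z *; rewrite !addrA z add0r.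
by apply: contra nz0 => /eqP Q_th0; move: z; rewrite Q_th0 addr0 => ->.
Qed.

Lemma normal_cone_psd_le0 nu Psi Q0 SK Q :
  Lplus nu Lam Psi Q0 -> normal_cone nu Lam Psi Q0 SK ->
  is_family Lam Q -> (forall th, torus th -> psd (Qfun Lam Q th)) ->
  fam_ip Lam SK Q <= 0.
Proof.
move=> Lplus0 [_ SK_normal] famQ psdQ.
have normal Q' : Lplus nu Lam Psi (fun k => Q0 k + Q' k) -> fam_ip Lam SK Q' <= 0.
  move=> /SK_normal; congr (fam_ip _ _ _ <= _).
  by apply/funext => k; rewrite addrAC subrr add0r.
case: (Lplus_add_psd Lplus0 famQ psdQ) => /normal //.
by rewrite fam_ipDr; lra.
Qed.

Definition const_fam (c : C) (k : d.-tuple int) : 'M[C]_m :=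
  if k == [tuple of nseq d 0] then c%:M else 0.

Lemma is_family_const_fam (r : R) : is_family Lam (const_fam r%:C%C).
Proof.
move=> k _; rewrite /const_fam negk_eq0.
by case: ifP => _; rewrite ?ctr_real_scalar ?ctr0.
Qed.

Lemma fam_ip_const_fam (r : R) Q : [tuple of nseq d 0] \in Lam -> is_family Lam Q ->
  fam_ip Lam (const_fam r%:C%C) Q = r * complex.Re (\tr (Q [tuple of nseq d 0])).
Proof.
move=> k0_Lam famQ; rewrite /fam_ip (bigD1_seq _ k0_Lam) ?fset_uniq //=.
rewrite big1_seq ?addr0 => [|k /andP[k_neq0 _]]; last first.
  by rewrite /const_fam (negbTE k_neq0) mul0mx mxtrace0.
rewrite /const_fam eqxx -{2}negk0 famQ // mul_scalar_mx mxtraceZ.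
by case: (\tr _) => a b; rewrite /= !mul0r subr0.
Qed.

Lemma Cplus_add_const_fam S (r : R) :
  [tuple of nseq d 0] \in Lam -> 0 < r -> is_family Lam S ->
  (forall Q, is_family Lam Q -> (forall th, torus th -> psd (Qfun Lam Q th)) ->
     0 <= fam_ip Lam S Q) ->
  Cplus Lam (fun k => S k + const_fam r%:C%C k).
Proof.
move=> k0_Lam r_gt0 famS S_dual; split.
  exact/is_familyD/is_family_const_fam.
move=> Q famQ Q_neq0 psdQ.
rewrite fam_ipDl fam_ip_const_fam // ltr_pwDr ?S_dual //.
have := psd_Qfun_trace_coef0_gt0 k0_Lam Q_neq0 psdQ.
by rewrite ltcE => /andP[_ /= tr_gt0]; rewrite pmulr_rgt0.
Qed.

End Families.

Theorem lemma7p1 (R : realType) (d m nu : nat)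
  (Lam : {fset d.-tuple int})
  (Sigma : d.-tuple int -> 'M[complex R]_m)
  (Psi : d.-tuple R -> 'M[complex R]_m)
  (Q0 SK : d.-tuple int -> 'M[complex R]_m) :
  (1 <= d)%N -> (1 <= m)%N -> (2 <= nu)%N ->
  [tuple of nseq d 0%R] \in Lam ->
  (forall k, k \in Lam -> negk k \in Lam) ->
  is_family Lam Sigma ->
  rational_entries Psi ->
  bounded_coercive Psi ->
  feasible Lam Sigma ->
  (* Q0 is the unique minimizer of J_nu over L_+, and lies in the boundary of L_+ *)
  Lplus nu Lam Psi Q0 ->
  (forall Q, Lplus nu Lam Psi Q -> (J_nu nu Lam Psi Sigma Q0 <= J_nu nu Lam Psi Sigma Q)%E) ->
  (forall Q, Lplus nu Lam Psi Q -> (J_nu nu Lam Psi Sigma Q <= J_nu nu Lam Psi Sigma Q0)%E ->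
     fam_eq Lam Q Q0) ->
  dLplus nu Lam Psi Q0 ->
  normal_cone nu Lam Psi Q0 SK ->
  fam_closure Lam (Cplus Lam) (fun k => - SK k).
Proof.
(* Only [Q0 \in L_+] and the normal-cone inequality matter. *)
move=> _ _ _ k0_Lam _ _ _ _ _ Lplus0 _ _ _ SK_normal eps eps_gt0.
have [famSK _] := SK_normal.
have eps2_gt0 : 0 < eps / 2 by rewrite divr_gt0.
exists (fun k => - SK k + const_fam m (eps / 2)%:C%C k); split.
  apply: Cplus_add_const_fam => // [k k_Lam | Q famQ psdQ].
    by rewrite famSK // ctrN.
  by rewrite fam_ipNl oppr_ge0 (normal_cone_psd_le0 Lplus0 SK_normal famQ psdQ).
move=> k _ i j; rewrite !mxE opprK addrAC addNr add0r /const_fam.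
have eps2_lt : `|(eps / 2)%:C%C| < eps%:C%C by rewrite gtr0_norm ?ltcR //; lra.
case: ifP => _; rewrite mxE; last by rewrite normr0 ltcR.
by case: (i == j); [rewrite mulr1n; exact: eps2_lt | rewrite mulr0n normr0 ltcR].
Qed.
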